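(* Let $\lambda\in(0,r^\alpha)$ and consider the $\lambda$-NRW on the augmented tree with horizontal conductances $c(\mathbf x,\mathbf y)=r^{\alpha|\mathbf x|}\lambda^{-|\mathbf x|}$. Then for any two closed subsets $\Phi,\Psi\subset K$, the limit $\lim_{n\to\infty}R_n^{(\lambda)}(\Phi,\Psi)$ exists and is independent of the choice of the $\kappa$-sequence.
   Context: Let $\{S_i\}_{i=1}^N$ ($N\ge2$) be contractive similitudes of $\mathbb R^d$ with ratios $r_i\in(0,1)$ satisfying the open set condition; $K$ the self-similar set, $\alpha$ its Hausdorff dimension ($\sum_ir_i^\alpha=1$), $r=\min_ir_i$. $\Sigma^*$ finite words over $\{1,\dots,N\}$ with empty word $\vartheta$, $S_{\mathbf x}=S_{i_1}\circ\cdots\circ S_{i_k}$, $r_{\mathbf x}=r_{i_1}\cdots r_{i_k}$. $\mathcal J_0=\{\vartheta\}$, $\mathcal J_n=\{i_1\cdots i_k: r_{i_1\cdots i_k}\le r^n<r_{i_1\cdots i_{k-1}}\}$, $X=\bigcup_n\mathcal J_n$, $X_n=\bigcup_{k=0}^n\mathcal J_k$, $|\mathbf x|=n$ on $\mathcal J_n$, parent $\mathbf x^-$ = prefix of $\mathbf x$ in $\mathcal J_{n-1}$. Edges: vertical $\{\mathbf x,\mathbf x^-\}$, horizontal $\{\mathbf x,\mathbf y\}$ for $\mathbf x\ne\mathbf y\in\mathcal J_n$ with $\inf_{\xi,\eta\in K}|S_{\mathbf x}(\xi)-S_{\mathbf y}(\eta)|\le\gamma r^n$ ($\gamma>0$ fixed).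 The $\lambda$-NRW has symmetric conductances $c(\mathbf x,\mathbf x^-)=r_{\mathbf x}^\alpha\lambda^{-|\mathbf x|}$, $c(\mathbf x,\mathbf y)=r^{\alpha|\mathbf x|}\lambda^{-|\mathbf x|}$ on horizontal edges, zero off edges; $X_n$ carries the restricted conductances and energy $\mathcal E_{X_n}[f]=\frac12\sum_{\mathbf x,\mathbf y\in X_n}c(\mathbf x,\mathbf y)(f(\mathbf x)-f(\mathbf y))^2$. Effective resistance: for disjoint nonempty $E,F\subset X_n$, $R_{X_n}(E,F)=(\min\{\mathcal E_{X_n}[f]: f=1$ on $E$, $f=0$ on $F\})^{-1}$, and $R_{X_n}(E,F)=0$ if $E\cap F\ne\emptyset$. A geodesic ray is $(\mathbf x_n)_{n\ge0}$, $\mathbf x_n\in\mathcal J_n$, each a prefix of the next; it converges to $\xi\in K$ if $\xi\in S_{\mathbf x_n}(K)$ for all $n$. A $\kappa$-sequence is a family of maps $\kappa_n:K\to\mathcal J_n$ such that for each $\xi\in K$, $(\kappa_n(\xi))_n$ is a geodesic ray converging to $\xi$. The level-$n$ resistance is $R^{(\lambda)}_n(\Phi,\Psi)=R_{X_n}(\kappa_n(\Phi),\kappa_n(\Psi))$. *)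

From HB Require Import structures.
From mathcomp Require Import all_boot all_order all_algebra.
From mathcomp Require Import all_classical all_reals all_analysis.
Set Implicit Arguments. Unset Strict Implicit. Unset Printing Implicit Defensive.
Import Order.TTheory GRing.Theory Num.Theory.
Import numFieldNormedType.Exports.
Local Open Scope ring_scope.
Local Open Scope classical_set_scope.

Section NRW.
Variables (R : realType) (d N : nat).
Notation pt := 'rV[R]_d.

Definition edist (x y : pt) : R :=
  Num.sqrt (\sum_(i < d) (x ord0 i - y ord0 i) ^+ 2).

Definition ebounded (A : set pt) : Prop :=
  exists M : R, forall x y, A x -> A y -> edist x y <= M.

Definition similitude (f : pt -> pt) (c : R) : Prop :=
  forall x y, edist (f x) (f y) = c * edist x y.

Variable S : 'I_N -> pt -> pt.
Variable ri : 'I_N -> R.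

Definition OSC : Prop :=
  exists V : set pt, open V /\ V !=set0 /\ ebounded V /\
    (forall i, S i @` V `<=` V) /\
    (forall i j, i != j -> S i @` V `&` S j @` V = set0).

Definition self_similar_set (K : set pt) : Prop :=
  K !=set0 /\ compact K /\ K = \bigcup_i (S i @` K).

Definition rw (w : seq 'I_N) : R := \prod_(i <- w) ri i.
Definition Sw (w : seq 'I_N) : pt -> pt := foldr (fun i g => S i \o g) id w.
Definition rmin : R := \big[Num.min/1]_(i < N) ri i.

Definition inJ (n : nat) (w : seq 'I_N) : Prop :=
  if n is 0 then w = [::]
  else w <> [::] /\ rw w <= rmin ^+ n /\ rmin ^+ n < rw (take (size w).-1 w).

(* vertices are pairs (n, w) with w \in J_n; |(n,w)| = n *)
Definition vertex := (nat * seq 'I_N)%type.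

Definition inX (n : nat) : set vertex :=
  [set v | (v.1 <= n)%N /\ inJ v.1 v.2].

Definition vert (u v : vertex) : Prop :=
  u.1 = v.1.+1 /\ inJ u.1 u.2 /\ inJ v.1 v.2 /\ prefix v.2 u.2.

Variables (K : set pt) (alpha gamma lambda : R).

Definition horiz (u v : vertex) : Prop :=
  u.1 = v.1 /\ u.2 <> v.2 /\ inJ u.1 u.2 /\ inJ v.1 v.2 /\
  (* inf_{xi, eta in K} |S_u xi - S_v eta| <= gamma r^n *)
  (forall e : R, 0 < e -> exists xi eta, K xi /\ K eta /\
     edist (Sw u.2 xi) (Sw v.2 eta) < gamma * rmin ^+ u.1 + e).

Definition cond (u v : vertex) : R :=
  if `[< vert u v >] then rw u.2 `^ alpha * lambda ^- u.1
  else if `[< vert v u >] then rw v.2 `^ alpha * lambda ^- v.1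
  else if `[< horiz u v >] then (rmin `^ alpha) ^+ u.1 * lambda ^- u.1
  else 0.

Definition energy (n : nat) (f : vertex -> R) : R :=
  2^-1 * \sum_(u \in inX n) \sum_(v \in inX n) cond u v * (f u - f v) ^+ 2.

Definition admissible (E F : set vertex) : set (vertex -> R) :=
  [set f | (forall x, E x -> f x = 1) /\ (forall x, F x -> f x = 0)].

Definition Reff (n : nat) (E F : set vertex) : R :=
  if `[< E `&` F !=set0 >] then 0
  else (inf [set energy n f | f in admissible E F])^-1.

Definition kappa_seq (kappa : nat -> pt -> seq 'I_N) : Prop :=
  forall xi, K xi -> forall n,
    inJ n (kappa n xi) /\ prefix (kappa n xi) (kappa n.+1 xi) /\
    (Sw (kappa n xi) @` K) xi.

Definition Rlevel (kappa : nat -> pt -> seq 'I_N) (n : nat)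
    (Phi Psi : set pt) : R :=
  Reff n ((fun xi => (n, kappa n xi)) @` Phi) ((fun xi => (n, kappa n xi)) @` Psi).

End NRW.

From Pilot Require Import Defs.
From mathcomp Require Import all_boot all_order all_algebra.
From mathcomp Require Import all_classical all_reals all_analysis.
From mathcomp Require Import ring lra.
Set Implicit Arguments. Unset Strict Implicit. Unset Printing Implicit Defensive.
Import Order.TTheory GRing.Theory Num.Theory.
Import numFieldNormedType.Exports.
Local Open Scope ring_scope.
Local Open Scope classical_set_scope.

(** Write [x_m(k) := sqrt (R_{X_m}(kappa_k Phi, kappa_k Psi))], so that
  [R_n = x_n(n)^2].  Square roots of effective resistances obey a triangle
  inequality: if every point of [A] (resp. [B]) is joined to [A'] (resp. [B'])
  by an edge of conductance at least [t^-2], then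
  [sqrt R(A', B') <= sqrt R(A, B) + 3 t].  For the lambda-NRW this applies with
  [t_j = theta^j / sqrt (r^alpha)], [theta = sqrt (lambda / r^alpha) < 1], both
  to the vertical edges between [kappa_j] and [kappa_(j+1)], which makes
  [x_m(k)] Cauchy in [k] uniformly in [m], and to the horizontal edges between
  the level-[n] cells that two kappa-sequences assign to the same point.  As
  [x_m(k)] is nonincreasing in [m] (more edges, more conductance), the diagonal
  [x_n(n)] converges, and its limit does not depend on the kappa-sequence. *)

Section Words.
Variables (R : realType) (N : nat) (ri : 'I_N -> R).
Hypothesis ri01 : forall i, 0 < ri i < 1.

Lemma rw_nil : rw ri [::] = 1.
Proof. by rewrite /rw big_nil. Qed.

Lemma rw_cons i s : rw ri (i :: s) = ri i * rw ri s.
Proof. by rewrite /rw big_cons. Qed.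

Lemma rw_rcons s i : rw ri (rcons s i) = rw ri s * ri i.
Proof. by rewrite /rw -cats1 big_cat big_seq1. Qed.

Lemma rw_gt0 s : 0 < rw ri s.
Proof.
elim: s => [|i s IH]; first by rewrite rw_nil.
by rewrite rw_cons mulr_gt0 //; case/andP: (ri01 i).
Qed.

Lemma rmin_le i : rmin ri <= ri i.
Proof. exact: bigmin_le. Qed.

Lemma rmin_gt0 : 0 < rmin ri.
Proof. by apply: lt_bigmin => // i _; case/andP: (ri01 i). Qed.

Lemma rmin_le1 : rmin ri <= 1.
Proof. exact: bigmin_le_id. Qed.

Let rmax := \big[Num.max/0]_(i < N) ri i.

Let rw_le_rmax s : rw ri s <= rmax ^+ size s.
Proof.
elim: s => [|i s IH]; first by rewrite rw_nil.
rewrite rw_cons exprS ler_pM ?(ltW (rw_gt0 s)) //; last exact: le_bigmax.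
by case/andP: (ri01 i) => /ltW.
Qed.

Lemma inJ_rw_ge n w : inJ ri n w -> rmin ri ^+ n.+1 <= rw ri w.
Proof.
case: n => [/= ->|n [wn [_]]]; first by rewrite rw_nil expr1 rmin_le1.
case/lastP: w wn => [//|s i] _.
rewrite size_rcons -cats1 take_size_cat // cats1 rw_rcons => lt_s.
rewrite [X in X <= _]exprSr ler_pM ?exprn_ge0 ?(ltW rmin_gt0) ?rmin_le //.
exact: ltW.
Qed.

Lemma inJ_size_bounded m :
  exists L, forall k w, (k <= m)%N -> inJ ri k w -> (size w <= L)%N.
Proof.
have rmax_cvg : (GRing.exp rmax : R ^nat) @ \oo --> (0 : R).
  apply: cvg_expr; rewrite ger0_norm; last exact: bigmax_ge_id.
  by apply: bigmax_lt => // i _; case/andP: (ri01 i).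
have [L _ small] := cvgr_lt _ rmax_cvg _ (exprn_gt0 m rmin_gt0 : 0 < rmin ri ^+ m).
exists L => -[|k] w km /=; first by move->.
move=> [wn [_ lt_take]]; rewrite leqNgt; apply/negP => Lw.
have rmin_ge : rmin ri ^+ m <= rmin ri ^+ k.+1.
  exact: ler_wiXn2l (ltW rmin_gt0) rmin_le1 _ _ km.
have := rw_le_rmax (take (size w).-1 w).
rewrite size_take ltn_predL lt0n size_eq0 (introN eqP wn).
have /small : (L <= (size w).-1)%N by rewrite -ltnS (ltn_predK Lw).
move=> /= ?; apply/negP; rewrite -ltNge; lra.
Qed.

Lemma inX_finite m : finite_set (inX ri m).
Proof.
have [L HL] := inJ_size_bounded m.
apply: (@sub_finite_set _ _
  (`I_m.+1 `*` \bigcup_(k in `I_L.+1) (@tval k 'I_N @` setT))).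
  move=> [k w] [/= km Hw]; split => /=; first by rewrite /= ltnS.
  exists (size w); first by rewrite /= ltnS (HL k).
  by exists (in_tuple w).
apply: finite_setX; first exact: finite_II.
apply: bigcup_finite => [|k _]; first exact: finite_II.
exact: finite_image finite_finset.
Qed.

End Words.

Section FiniteSums.
Variables (R : realDomainType) (T : choiceType).

Lemma ler_fsum (A : set T) (F G : T -> R) : finite_set A ->
  (forall x, A x -> F x <= G x) -> \sum_(x \in A) F x <= \sum_(x \in A) G x.
Proof.
move=> Afin FG; rewrite !fsbig_finite // big_seq [leRHS]big_seq.
by apply: ler_sum => x; rewrite in_fset_set // inE => /FG.
Qed.

Lemma ler_fsum_subset (A B : set T) (F : T -> R) : finite_set B -> A `<=` B ->
  (forall x, B x -> 0 <= F x) -> \sum_(x \in A) F x <= \sum_(x \in B) F x.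
Proof.
move=> Bfin AB F0; rewrite -(setDUK AB) fsbigU0 //; last 3 first.
- exact: sub_finite_set Bfin.
- by apply: sub_finite_set Bfin => x [].
- by move=> x [Ax [_ nAx]].
by rewrite lerDl; apply: fsumr_ge0 => x [/F0].
Qed.

Lemma ler_fsum_term (A : set T) (F : T -> R) i : finite_set A -> A i ->
  (forall x, A x -> 0 <= F x) -> F i <= \sum_(x \in A) F x.
Proof.
move=> Afin Ai F0; rewrite (fsbigD1 i) //= lerDl.
by apply: fsumr_ge0 => x [/F0].
Qed.

End FiniteSums.

Definition clamp01 (R : realDomainType) (y : R) : R := Num.min 1 (Num.max 0 y).

Lemma clamp01_le0 (R : realDomainType) (y : R) : y <= 0 -> clamp01 y = 0.
Proof. by move=> y0; rewrite /clamp01 max_l // min_r. Qed.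

Lemma clamp01_ge1 (R : realDomainType) (y : R) : 1 <= y -> clamp01 y = 1.
Proof. by move=> y1; rewrite /clamp01 max_r ?min_l // (le_trans ler01). Qed.

Lemma clamp01_cases (R : realDomainType) (y : R) :
  [\/ y <= 0 /\ clamp01 y = 0, 1 <= y /\ clamp01 y = 1
     | (0 <= y <= 1) /\ clamp01 y = y].
Proof.
have [y0|y0] := lerP y 0; first by constructor 1; rewrite clamp01_le0.
have [y1|y1] := lerP 1 y; first by constructor 2; rewrite clamp01_ge1.
by constructor 3; rewrite /clamp01 max_r ?min_r ?(ltW y0) ?(ltW y1).
Qed.

Lemma clamp01_dist (R : realDomainType) (x y : R) :
  (clamp01 x - clamp01 y) ^+ 2 <= (x - y) ^+ 2.
Proof.
by case: (clamp01_cases x) => -[hx ->]; case: (clamp01_cases y) => -[hy ->];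
  rewrite ?subrr ?expr0n ?sqr_ge0 //=; nra.
Qed.

Section Network.
Variables (R : realType) (d N : nat) (S : 'I_N -> 'rV[R]_d -> 'rV[R]_d)
  (ri : 'I_N -> R) (K : set 'rV[R]_d) (alpha gamma lambda : R).
Hypothesis ri01 : forall i, 0 < ri i < 1.
Hypothesis lambda_gt0 : 0 < lambda.

Local Notation c := (cond S ri K alpha gamma lambda).
Local Notation E := (energy S ri K alpha gamma lambda).
Local Notation Res := (Reff S ri K alpha gamma lambda).

Lemma cond_ge0 u v : 0 <= c u v.
Proof.
have lambdaV_ge0 n : 0 <= lambda ^- n by rewrite invr_ge0 exprn_ge0 // ltW.
rewrite /cond; case: ifP => _; first by rewrite mulr_ge0 ?powR_ge0.
case: ifP => _; first by rewrite mulr_ge0 ?powR_ge0.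
by case: ifP => _ //; rewrite mulr_ge0 ?exprn_ge0 ?powR_ge0.
Qed.

Let term_ge0 f u v : 0 <= c u v * (f u - f v) ^+ 2.
Proof. by rewrite mulr_ge0 ?cond_ge0 ?sqr_ge0. Qed.

Lemma energy_ge0 m f : 0 <= E m f.
Proof.
rewrite /energy mulr_ge0 // fsumr_ge0 // => u _.
by rewrite fsumr_ge0 // => v _; apply: term_ge0.
Qed.

Lemma energy_edge m f u v : inX ri m u -> inX ri m v ->
  c u v * (f u - f v) ^+ 2 <= 2 * E m f.
Proof.
move=> Xu Xv; rewrite /energy [leRHS]mulrA divff ?mul1r //.
have Xfin := inX_finite ri01 m.
pose row x := \sum_(y \in inX ri m) c x y * (f x - f y) ^+ 2.
have row_ge0 x : inX ri m x -> 0 <= row x by move=> _; apply: fsumr_ge0.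
apply: le_trans (ler_fsum_term Xfin Xu row_ge0).
by apply: ler_fsum_term Xfin Xv _ => y _; apply: term_ge0.
Qed.

Lemma energy_mono m m' f : (m <= m')%N -> E m f <= E m' f.
Proof.
move=> mm'; rewrite /energy ler_pM2l ?invr_gt0 //.
have Xfin := inX_finite ri01 m; have Xfin' := inX_finite ri01 m'.
have sub : inX ri m `<=` inX ri m'.
  by move=> v [vm Jv]; split=> //; exact: leq_trans mm'.
apply: le_trans (ler_fsum (G := fun u => \sum_(v \in inX ri m') _) Xfin _) _.
  by move=> u _; apply: ler_fsum_subset.
by apply: ler_fsum_subset => // u _; apply: fsumr_ge0.
Qed.

Lemma energy_contract m f g L : 0 <= L ->
  (forall u v, (g u - g v) ^+ 2 <= L * (f u - f v) ^+ 2) -> E m g <= L * E m f.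
Proof.
move=> L0 gf; rewrite /energy mulrCA ler_pM2l ?invr_gt0 //.
have Xfin := inX_finite ri01 m.
rewrite mulr_fsumr; apply: ler_fsum => // u _.
rewrite mulr_fsumr; apply: ler_fsum => // v _.
by rewrite [leRHS]mulrCA ler_wpM2l ?cond_ge0.
Qed.

Definition capacity m (A B : set (vertex N)) := inf [set E m f | f in admissible A B].

Lemma capacity_le m A B f : admissible A B f -> capacity m A B <= E m f.
Proof.
move=> Af; apply: ge_inf; last by exists f.
by exists 0 => _ [g _ <-]; apply: energy_ge0.
Qed.

Lemma capacity_ge m A B M : (exists f : vertex N -> R, admissible A B f) ->
  (forall f, admissible A B f -> M <= E m f) -> M <= capacity m A B.
Proof.
move=> [f Af] M_le; apply: lb_le_inf; first by exists (E m f), f.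
by move=> _ [g Ag <-]; apply: M_le.
Qed.

Lemma capacity_eq0 m A B : ~ (exists f : vertex N -> R, admissible A B f) ->
  capacity m A B = 0.
Proof.
move=> no_adm; rewrite /capacity (_ : [set _ | f in _] = set0) ?inf0 //.
by apply/seteqP; split => // y [f Af _]; apply: no_adm; exists f.
Qed.

Lemma capacity_ge0 m A B : 0 <= capacity m A B.
Proof.
have [[f Af]|no_adm] := pselect (exists f : vertex N -> R, admissible A B f).
  by apply: capacity_ge => [|g _]; [exists f | apply: energy_ge0].
by rewrite capacity_eq0.
Qed.

Lemma Reff_capacity m A B : Res m A B = (capacity m A B)^-1.
Proof.
rewrite /Reff; case: asboolP => // [[x [Ax Bx]]].
rewrite capacity_eq0 ?invr0 // => -[f [f1 f0]].
by have := f1 x Ax; rewrite f0 // => /eqP; rewrite eq_sym oner_eq0.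
Qed.

Lemma Reff_ge0 m A B : 0 <= Res m A B.
Proof. by rewrite Reff_capacity invr_ge0 capacity_ge0. Qed.

(* The lower bound [mu] rules out a vanishing capacity, whose inverse is the
   junk value [0^-1 = 0]. *)
Lemma Reff_mono m m' mu A B : (m <= m')%N -> 0 < mu ->
  (forall f, admissible A B f -> mu <= E m f) -> Res m' A B <= Res m A B.
Proof.
move=> mm' mu0 mu_le; rewrite !Reff_capacity.
have [adm|no_adm] := pselect (exists f : vertex N -> R, admissible A B f); last first.
  by rewrite !capacity_eq0.
have cap_gt0 : 0 < capacity m A B by apply: lt_le_trans mu0 (capacity_ge adm mu_le).
have cap_le : capacity m A B <= capacity m' A B.
  apply: capacity_ge => // f Af.
  exact: le_trans (capacity_le m Af) (energy_mono f mm').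
by rewrite lef_pV2 ?posrE // (lt_le_trans cap_gt0).
Qed.

Lemma sqrt_Reff_le m A B M : 0 < M ->
  (forall f, admissible A B f -> 1 <= Num.sqrt (E m f) * M) ->
  Num.sqrt (Res m A B) <= M.
Proof.
move=> M0 M_ge; rewrite Reff_capacity.
have [adm|no_adm] := pselect (exists f : vertex N -> R, admissible A B f); last first.
  by rewrite capacity_eq0 // invr0 sqrtr0 ltW.
have cap_ge : M ^- 2 <= capacity m A B.
  apply: capacity_ge => // f /M_ge one_le.
  rewrite -div1r ler_pdivrMr ?exprn_gt0 // -(sqr_sqrtr (energy_ge0 m f)) -exprMn.
  nra.
have cap_gt0 : 0 < capacity m A B.
  by apply: lt_le_trans cap_ge; rewrite invr_gt0 exprn_gt0.
rewrite -(ger0_norm (ltW M0)) -sqrtr_sqr ler_wsqrtr // -[leRHS]invrK lef_pV2 ?posrE //.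
by rewrite invr_gt0 exprn_gt0.
Qed.

Definition close m t (A A' : set (vertex N)) :=
  forall a, A a -> exists2 a', A' a' &
    a = a' \/ [/\ inX ri m a, inX ri m a' & 1 <= c a a' * t ^+ 2].

Lemma edge_dist m t f u v : inX ri m u -> inX ri m v -> 1 <= c u v * t ^+ 2 ->
  (f u - f v) ^+ 2 <= 2 * t ^+ 2 * E m f.
Proof.
move=> Xu Xv c_ge; have := energy_edge f Xu Xv; have := cond_ge0 u v.
have := sqr_ge0 (f u - f v); have := sqr_ge0 t; nra.
Qed.

Lemma close_dist m t A A' f : close m t A A' -> forall a, A a ->
  exists2 a', A' a' & (f a - f a') ^+ 2 <= 2 * t ^+ 2 * E m f.
Proof.
move=> AA' a /AA' [a' A'a' near]; exists a' => //.
case: near => [<-|[Xa Xa' c_ge]]; last exact: edge_dist.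
by rewrite subrr expr0n mulr_ge0 ?energy_ge0 // mulr_ge0 ?sqr_ge0.
Qed.

Lemma energy_clamp01_rescale m f a b :
  E m (fun v => clamp01 ((f v - b) / a)) <= a ^- 2 * E m f.
Proof.
apply: energy_contract => [|u v]; first by rewrite invr_ge0 sqr_ge0.
apply: le_trans (clamp01_dist _ _) _.
by rewrite -mulrBl opprD addrACA subrr addr0 exprMn exprVn mulrC.
Qed.

Lemma admissible_clamp_close m t A B A' B' f eps :
  close m t A A' -> close m t B B' -> admissible A' B' f ->
  8 * t ^+ 2 * E m f <= eps ^+ 2 -> 0 <= eps < 1 ->
  admissible A B (fun v => clamp01 ((f v - eps / 2) / (1 - eps))).
Proof.
move=> AA' BB' [f1 f0] E_le /andP[eps0 eps1]; have gap : 0 < 1 - eps by lra.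
split => [a /(close_dist f AA') [a' /f1 ->]|b /(close_dist f BB') [b' /f0 ->]] dist.
  by rewrite clamp01_ge1 // ler_pdivlMr //; nra.
by rewrite clamp01_le0 // ler_pdivrMr //; nra.
Qed.

(* Unless [3 t sqrt (E f) >= 1], the truncated rescaling of a potential [f] for
   [A', B'] is a potential for [A, B] of energy at most
   [E f / (1 - 3 t sqrt (E f))^2]. *)
Lemma sqrt_Reff_close m t mu A B A' B' : 0 < t -> 0 < mu ->
  (forall f, admissible A B f -> mu <= E m f) ->
  close m t A A' -> close m t B B' ->
  Num.sqrt (Res m A' B') <= Num.sqrt (Res m A B) + 3 * t.
Proof.
move=> t0 mu0 mu_le AA' BB'; set s := Num.sqrt (Res m A B).
have s0 : 0 <= s by apply: sqrtr_ge0.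
apply: sqrt_Reff_le => [|f f_adm]; first by rewrite ltr_wpDl ?mulr_gt0.
set q := Num.sqrt (E m f); have q0 : 0 <= q by apply: sqrtr_ge0.
have qq : q ^+ 2 = E m f by rewrite sqr_sqrtr ?energy_ge0.
have [big|small] := lerP 1 (3 * t * q); first by nra.
have eps_ge : 8 * t ^+ 2 * E m f <= (3 * t * q) ^+ 2 by rewrite -qq; nra.
have eps01 : 0 <= 3 * t * q < 1 by rewrite small !mulr_ge0 // ltW.
have g_adm := admissible_clamp_close AA' BB' f_adm eps_ge eps01.
have cap_gt0 : 0 < capacity m A B.
  by apply: lt_le_trans mu0 (capacity_ge _ mu_le); eexists; exact: g_adm.
have cap_le : capacity m A B <= (1 - 3 * t * q) ^- 2 * q ^+ 2.
  by rewrite qq; apply: le_trans (capacity_le m g_adm) (energy_clamp01_rescale _ _ _ _).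
have ss : s ^+ 2 * capacity m A B = 1.
  by rewrite sqr_sqrtr ?Reff_ge0 // Reff_capacity mulVf ?gt_eqF.
have gap : 0 < 1 - 3 * t * q by rewrite subr_gt0.
have key : capacity m A B * (1 - 3 * t * q) ^+ 2 <= q ^+ 2.
  by rewrite -ler_pdivlMr ?exprn_gt0 // [leRHS]mulrC.
have : (1 - 3 * t * q) ^+ 2 <= (s * q) ^+ 2.
  by rewrite -[leLHS]mul1r -{1}ss exprMn -(mulrA (s ^+ 2)) ler_wpM2l ?sqr_ge0.
have sq0 : 0 <= s * q by apply: mulr_ge0.
nra.
Qed.

End Network.

Section Limits.
Variable R : realType.

Lemma cvg_dist_le (s s' z : R ^nat) (l : R) : s @ \oo --> l ->
  (forall n, `|s n - s' n| <= z n) -> z @ \oo --> 0 -> s' @ \oo --> l.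
Proof.
move=> s_l sz z0.
have d0 : (fun n => s n - s' n) @ \oo --> 0.
  apply: (@squeeze_cvgr _ _ _ _ (fun n => - z n) z); last exact: z0.
    by apply: nearW => n; rewrite -ler_norml.
  by rewrite -oppr0; apply: cvgN.
have -> : s' = (fun n => s n - (s n - s' n)) by apply: funext => n; rewrite subKr.
by rewrite -[l]subr0; apply: cvgB.
Qed.

Lemma diag_cvg (x : nat -> nat -> R) (eta : R ^nat) :
  (forall k m m', (k <= m)%N -> (m <= m')%N -> x m' k <= x m k) ->
  (forall m k, 0 <= x m k) ->
  (forall k n m, (k <= n)%N -> (n <= m)%N -> `|x m k - x m n| <= eta k) ->
  eta @ \oo --> 0 ->
  cvgn (fun n => x n n).
Proof.
move=> x_mono x_ge0 x_dist eta0.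
apply/cauchy_cvgP/cauchy_exP => e e0.
have e20 : 0 < e / 2 by rewrite divr_gt0.
have /cvgrPdist_lt/(_ _ e20) [k _ eta_small] := eta0.
have {eta_small} eta_k : eta k < e / 2.
  have := eta_small k (leqnn k); rewrite sub0r normrN.
  by apply: le_lt_trans; apply: ler_norm.
pose u m := x (m + k)%N k.
have u_noninc : nonincreasing_seq u.
  by move=> a b ab; apply: x_mono; rewrite ?leq_addl ?leq_add2r.
have u_lb : has_lbound (range u) by exists 0 => _ [m _ <-]; apply: x_ge0.
have u_cvg := nonincreasing_cvgn u_noninc u_lb.
set l := inf _ in u_cvg.
have /cvgrPdist_lt/(_ _ e20) [M _ u_close] := u_cvg.
exists l; exists (M + k)%N => // n /= Mkn.
rewrite -ball_normE /ball_ /=.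
have kn : (k <= n)%N by apply: leq_trans Mkn; rewrite leq_addl.
have l_xnk : `|l - x n k| < e / 2.
  have := u_close (n - k)%N; rewrite /u subnK //; apply => /=.
  by rewrite leq_subRL // addnC.
apply: le_lt_trans (ler_distD (x n k) _ _) _.
rewrite (splitr e) ltr_leD //; apply: le_trans (x_dist k n n kn (leqnn n)) _.
exact: ltW.
Qed.

End Limits.

Section KappaSequences.
Variables (R : realType) (d N : nat) (S : 'I_N -> 'rV[R]_d -> 'rV[R]_d)
  (ri : 'I_N -> R) (K : set 'rV[R]_d) (alpha gamma lambda : R).
Hypothesis ri01 : forall i, 0 < ri i < 1.
Hypothesis alpha_ge0 : 0 <= alpha.
Hypothesis gamma_ge0 : 0 <= gamma.
Hypothesis lambda_gt0 : 0 < lambda.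
Hypothesis lambda_lt : lambda < rmin ri `^ alpha.

Local Notation c := (cond S ri K alpha gamma lambda).
Local Notation E := (energy S ri K alpha gamma lambda).
Local Notation Res := (Reff S ri K alpha gamma lambda).
Local Notation close := (close S ri K alpha gamma lambda).
Local Notation ks := (kappa_seq S ri K).
Local Notation ra := (rmin ri `^ alpha).
Local Notation th := (Num.sqrt (lambda / ra)).
(* Vertical edges into level [j] and horizontal edges at level [j] have
   conductance at least [T j ^- 2]. *)
Local Notation T j := (th ^+ j / Num.sqrt ra).
Local Notation img kap X k := ((fun xi => (k, kap k xi)) @` X).

Lemma ra_gt0 : 0 < ra.
Proof. exact/powR_gt0/rmin_gt0. Qed.

Lemma ra_le1 : ra <= 1.
Proof.
have <- : 1 `^ alpha = 1 :> R by rewrite powR1.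
by rewrite ge0_ler_powR ?nnegrE ?(rmin_le1 ri) // ltW // rmin_gt0.
Qed.

Lemma th_ge0 : 0 <= th.
Proof. exact: sqrtr_ge0. Qed.

Lemma th_lt1 : th < 1.
Proof. by rewrite -sqrtr1 ltr_sqrt ?ltr01 // ltr_pdivrMr ?ra_gt0 // mul1r. Qed.

Lemma T_gt0 j : 0 < T j.
Proof. by rewrite divr_gt0 ?exprn_gt0 // sqrtr_gt0 ?divr_gt0 ?ra_gt0. Qed.

Lemma T_sq j : T j ^+ 2 = lambda ^+ j / ra ^+ j.+1.
Proof.
have ra0 := ra_gt0.
rewrite expr_div_n -exprM mulnC exprM !sqr_sqrtr ?divr_ge0 ?ltW //.
by rewrite expr_div_n exprSr invfM mulrA.
Qed.

Lemma T_sq_le j : ra * T j ^+ 2 <= 1.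
Proof.
have ra0 := ra_gt0.
have -> : ra * T j ^+ 2 = (lambda / ra) ^+ j.
  by rewrite T_sq expr_div_n exprSr; field; rewrite expf_neq0 ?gt_eqF.
apply: exprn_ile1; first by rewrite divr_ge0 // ltW.
by rewrite ler_pdivrMr // mul1r ltW.
Qed.

Lemma rw_powR_ge j w : inJ ri j w -> ra ^+ j.+1 <= rw ri w `^ alpha.
Proof.
move=> Jw; have rmin0 := ltW (rmin_gt0 ri01).
have -> : ra ^+ j.+1 = (rmin ri ^+ j.+1) `^ alpha.
  by rewrite -!powR_mulrn ?powR_ge0 // -!powRrM mulrC.
rewrite ge0_ler_powR ?nnegrE ?exprn_ge0 ?(inJ_rw_ge ri01) //.
exact/ltW/rw_gt0.
Qed.

Lemma vert_cond_ge j w : inJ ri j.+1 w ->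
  1 <= rw ri w `^ alpha * lambda ^- j.+1 * T j.+1 ^+ 2.
Proof.
move=> Jw; have ra0 := ra_gt0.
have -> : rw ri w `^ alpha * lambda ^- j.+1 * T j.+1 ^+ 2 =
    rw ri w `^ alpha / ra ^+ j.+2.
  by rewrite T_sq; field; rewrite !expf_neq0 ?gt_eqF.
by rewrite ler_pdivlMr ?exprn_gt0 // mul1r rw_powR_ge.
Qed.

Lemma kappa_inX kap xi m j : ks kap -> K xi -> (j <= m)%N -> inX ri m (j, kap j xi).
Proof. by move=> ks_kap Kxi jm; split=> //; case: (ks_kap xi Kxi j). Qed.

Lemma kappa_vert_cond_ge kap xi j : ks kap -> K xi ->
  1 <= c (j.+1, kap j.+1 xi) (j, kap j xi) * T j.+1 ^+ 2 /\
  1 <= c (j, kap j xi) (j.+1, kap j.+1 xi) * T j.+1 ^+ 2.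
Proof.
move=> ks_kap Kxi; have [Jj [pre _]] := ks_kap xi Kxi j.
have [Jj1 _] := ks_kap xi Kxi j.+1.
have down : vert ri (j.+1, kap j.+1 xi) (j, kap j xi) by [].
have not_up : ~ vert ri (j, kap j xi) (j.+1, kap j.+1 xi).
  by move=> [/= /eqP]; rewrite -addn2 -{1}(addn0 j) eqn_add2l.
have c_ge := vert_cond_ge Jj1.
by split; rewrite /cond ?(asboolF not_up) (asboolT down).
Qed.

Lemma close_kappa_vert kap X m j : ks kap -> X `<=` K -> (j < m)%N ->
  close m (T j.+1) (img kap X j) (img kap X j.+1) /\
  close m (T j.+1) (img kap X j.+1) (img kap X j).
Proof.
move=> ks_kap XK jm; have jm' := ltnW jm.
split=> _ [xi Xxi <-]; have Kxi := XK xi Xxi.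
  exists (j.+1, kap j.+1 xi); first by exists xi.
  right; split; try exact: kappa_inX.
  by case: (kappa_vert_cond_ge j ks_kap Kxi).
exists (j, kap j xi); first by exists xi.
right; split; try exact: kappa_inX.
by case: (kappa_vert_cond_ge j ks_kap Kxi).
Qed.

Lemma close_kappa_horiz kap kap' X m : ks kap -> ks kap' -> X `<=` K ->
  close m (T m) (img kap X m) (img kap' X m).
Proof.
move=> ks_kap ks_kap' XK _ [xi Xxi <-]; have Kxi := XK xi Xxi.
exists (m, kap' m xi); first by exists xi.
have [Jm [_ [y Ky Sy]]] := ks_kap xi Kxi m.
have [Jm' [_ [y' Ky' Sy']]] := ks_kap' xi Kxi m.
have [->|neq] := eqVneq (kap m xi) (kap' m xi); [by left | right].
split; try exact: kappa_inX.
have not_vert w w' : ~ vert ri (m, w) (m, w').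
  by move=> [/= /eqP]; rewrite -{1}(addn0 m) -addn1 eqn_add2l.
(* both cells contain [xi], so their images of [K] are at distance zero *)
have hor : horiz S ri K gamma (m, kap m xi) (m, kap' m xi).
  split=> //; split; first exact/eqP.
  do 2![split=> //]; move=> e e0; exists y, y'; do 2![split=> //].
  have edist_xx : Defs.edist xi xi = 0.
    by rewrite /Defs.edist big1 ?sqrtr0 // => i _; rewrite subrr expr0n.
  by rewrite Sy Sy' edist_xx ltr_wpDl // mulr_ge0 // exprn_ge0 // ltW // rmin_gt0.
have ra0 := ra_gt0.
rewrite /cond !(asboolF (not_vert _ _)) (asboolT hor) /= T_sq.
have -> : ra ^+ m * lambda ^- m * (lambda ^+ m / ra ^+ m.+1) = ra^-1.
  rewrite mulrA divfK ?expf_neq0 ?gt_eqF // exprS invfM mulrCA.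
  by rewrite mulfV ?expf_neq0 ?gt_eqF ?mulr1.
by rewrite invf_ge1 // ra_le1.
Qed.

Lemma kappa_dist_root kap xi m f k : ks kap -> K xi -> (k <= m)%N ->
  `|f (k, kap k xi) - f (0%N, [::])| <= k%:R * Num.sqrt (2 * E m f / ra).
Proof.
move=> ks_kap Kxi; set D := Num.sqrt _.
elim: k => [_|k IH km].
  by case: (ks_kap xi Kxi 0%N) => /= -> _; rewrite subrr normr0 mul0r.
have step : `|f (k.+1, kap k.+1 xi) - f (k, kap k xi)| <= D.
  have ra0 := ra_gt0; have E0 := energy_ge0 S ri K alpha gamma lambda_gt0 m f.
  rewrite -ler_sqr ?nnegrE ?sqrtr_ge0 // real_normK ?num_real // sqr_sqrtr; last first.
    by apply: divr_ge0 (ltW ra0); apply: mulr_ge0.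
  have [c_ge _] := kappa_vert_cond_ge k ks_kap Kxi.
  have Xk1 := kappa_inX ks_kap Kxi km; have Xk := kappa_inX ks_kap Kxi (ltnW km).
  apply: le_trans (edge_dist ri01 lambda_gt0 f Xk1 Xk c_ge) _.
  by rewrite ler_pdivlMr //; have := T_sq_le k.+1; nra.
apply: le_trans (ler_distD (f (k, kap k xi)) _ _) _.
have := IH (ltnW km); rewrite -natr1 mulrDl mul1r; lra.
Qed.

Variables (Phi Psi : set 'rV[R]_d).
Hypotheses (PhiK : Phi `<=` K) (PsiK : Psi `<=` K).
Hypotheses (Phi0 : Phi !=set0) (Psi0 : Psi !=set0).

Local Notation mu k := (ra / (8 * (k.+1)%:R ^+ 2)).

(* A potential drops by [1] along the [2 k] vertical edges joining
   [kappa_k xi] to [kappa_k eta] through the root. *)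
Lemma energy_kappa_lb kap m k f : ks kap -> (k <= m)%N ->
  admissible (img kap Phi k) (img kap Psi k) f -> mu k <= E m f.
Proof.
move=> ks_kap km [f1 f0]; have ra0 := ra_gt0.
have [xi Phixi] := Phi0; have [eta Psieta] := Psi0.
have := kappa_dist_root f ks_kap (PhiK Phixi) km.
have := kappa_dist_root f ks_kap (PsiK Psieta) km.
rewrite (f1 (k, kap k xi)) ?(f0 (k, kap k eta)); [|by exists eta|by exists xi].
set D := Num.sqrt _; rewrite !ler_norml => /andP[lo _] /andP[_ hi].
have one_le : 1 <= 2 * k%:R * D by lra.
have DD : D ^+ 2 * ra = 2 * E m f.
  rewrite sqr_sqrtr ?divfK ?gt_eqF //.
  by apply: divr_ge0 (ltW ra0); rewrite mulr_ge0 ?energy_ge0.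
have ra_le : ra <= 8 * k%:R ^+ 2 * E m f.
  have -> : 8 * k%:R ^+ 2 * E m f = (2 * k%:R * D) ^+ 2 * ra.
    by rewrite exprMn -(mulrA _ (D ^+ 2)) DD; ring.
  by rewrite ler_peMl ?exprn_ege1 // ltW.
rewrite ler_pdivrMr ?mulr_gt0 ?exprn_gt0 ?ltr0Sn //.
have := energy_ge0 S ri K alpha gamma lambda_gt0 m f.
have : 0 <= k%:R :> R by [].
rewrite -natr1; nra.
Qed.

Local Notation sqrtR kap m k := (Num.sqrt (Res m (img kap Phi k) (img kap Psi k))).
(* [C * th ^+ k] is the sum of the [3 * T j] over [j > k]. *)
Local Notation C := (3 * th / (Num.sqrt ra * (1 - th))).

Lemma mu_gt0 k : 0 < mu k.
Proof. by rewrite divr_gt0 ?ra_gt0 // mulr_gt0 // exprn_gt0 // ltr0Sn. Qed.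

Lemma th_geometric_cvg (a : R) : (fun n => a * th ^+ n) @ \oo --> 0.
Proof.
rewrite -(mulr0 a); apply: cvgMr; apply: cvg_expr.
by rewrite ger0_norm ?th_ge0 ?th_lt1.
Qed.

Lemma sqrtR_mono kap k m m' : ks kap -> (k <= m)%N -> (m <= m')%N ->
  sqrtR kap m' k <= sqrtR kap m k.
Proof.
move=> ks_kap km mm'; apply: ler_wsqrtr.
by apply: (Reff_mono ri01 lambda_gt0 mm' (mu_gt0 k)) => f; apply: energy_kappa_lb.
Qed.

Lemma sqrtR_step kap m j : ks kap -> (j < m)%N ->
  `|sqrtR kap m j - sqrtR kap m j.+1| <= 3 * T j.+1.
Proof.
move=> ks_kap jm.
have lb := fun f => energy_kappa_lb (f := f) ks_kap (ltnW jm).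
have lb' := fun f => energy_kappa_lb (f := f) ks_kap jm.
have [Phi_down Phi_up] := close_kappa_vert ks_kap PhiK jm.
have [Psi_down Psi_up] := close_kappa_vert ks_kap PsiK jm.
have le1 := sqrt_Reff_close ri01 lambda_gt0 (T_gt0 j.+1) (mu_gt0 j) lb
  Phi_down Psi_down.
have le2 := sqrt_Reff_close ri01 lambda_gt0 (T_gt0 j.+1) (mu_gt0 j.+1) lb'
  Phi_up Psi_up.
by rewrite ler_distl; apply/andP; split; lra.
Qed.

Lemma sqrtR_telescope kap k n m : ks kap -> (k <= n)%N -> (n <= m)%N ->
  `|sqrtR kap m k - sqrtR kap m n| <= C * th ^+ k - C * th ^+ n.
Proof.
move=> ks_kap; elim: n => [|n IH].
  by rewrite leqn0 => /eqP -> _; rewrite !subrr normr0.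
rewrite leq_eqVlt => /orP[/eqP <- _|]; first by rewrite !subrr normr0.
rewrite ltnS => kn nm.
apply: le_trans (ler_distD (sqrtR kap m n) _ _) _.
have -> : C * th ^+ k - C * th ^+ n.+1 =
    (C * th ^+ k - C * th ^+ n) + 3 * (th ^+ n.+1 / Num.sqrt ra).
  have sqrt_ra : Num.sqrt ra != 0 by rewrite gt_eqF // sqrtr_gt0 ra_gt0.
  have th1 : 1 - th != 0 by rewrite subr_eq0 eq_sym lt_eqF // th_lt1.
  by rewrite exprS; field; rewrite sqrt_ra th1.
by rewrite lerD ?IH ?sqrtR_step // ltnW.
Qed.

Lemma sqrtR_horiz kap kap' m : ks kap -> ks kap' ->
  `|sqrtR kap m m - sqrtR kap' m m| <= 3 * T m.
Proof.
move=> ks_kap ks_kap'.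
have lb := fun f => energy_kappa_lb (f := f) ks_kap (leqnn m).
have lb' := fun f => energy_kappa_lb (f := f) ks_kap' (leqnn m).
have le1 := sqrt_Reff_close ri01 lambda_gt0 (T_gt0 m) (mu_gt0 m) lb
  (close_kappa_horiz ks_kap ks_kap' PhiK) (close_kappa_horiz ks_kap ks_kap' PsiK).
have le2 := sqrt_Reff_close ri01 lambda_gt0 (T_gt0 m) (mu_gt0 m) lb'
  (close_kappa_horiz ks_kap' ks_kap PhiK) (close_kappa_horiz ks_kap' ks_kap PsiK).
by rewrite ler_distl; apply/andP; split; lra.
Qed.

Lemma sqrtR_cvg kap : ks kap -> cvgn (fun n => sqrtR kap n n).
Proof.
move=> ks_kap; apply: (@diag_cvg R (fun m k => sqrtR kap m k) (fun k => C * th ^+ k)).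
- by move=> k m m' km mm'; apply: sqrtR_mono.
- by move=> m k; apply: sqrtr_ge0.
- move=> k n m kn nm; apply: le_trans (sqrtR_telescope ks_kap kn nm) _.
  have th1 : 0 <= 1 - th by rewrite subr_ge0 ltW // th_lt1.
  by rewrite gerBl !mulr_ge0 ?exprn_ge0 ?invr_ge0 ?mulr_ge0 ?sqrtr_ge0 ?th_ge0.
- exact: th_geometric_cvg.
Qed.

Lemma sqrtR_lim kap kap' : ks kap -> ks kap' ->
  (fun n => sqrtR kap' n n) @ \oo --> lim ((fun n => sqrtR kap n n) @ \oo).
Proof.
move=> ks_kap ks_kap'.
apply: (cvg_dist_le (sqrtR_cvg ks_kap) (z := fun n => 3 * T n)).
  by move=> n; apply: sqrtR_horiz.
have -> : (fun n => 3 * T n) = (fun n => 3 / Num.sqrt ra * th ^+ n).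
  by apply: funext => n; rewrite mulrA mulrAC.
exact: th_geometric_cvg.
Qed.

End KappaSequences.

Lemma moran_dim_ge0 (R : realType) (N : nat) (ri : 'I_N -> R) (alpha : R) :
  (2 <= N)%N -> (forall i, 0 < ri i < 1) -> \sum_(i < N) ri i `^ alpha = 1 ->
  0 <= alpha.
Proof.
move=> N2 ri01 moran; rewrite leNgt; apply/negP => alpha_lt0.
have : \sum_(i < N) (1 : R) <= \sum_(i < N) ri i `^ alpha.
  apply: ler_sum => i _; have /andP[ri0 ri1] := ri01 i.
  by rewrite -(powRr0 (ri i)) ger_powR ?ri0 ?ltW.
rewrite moran sumr_const card_ord -[1 *+ N]/(N%:R).
have : (2 : R) <= N%:R by rewrite ler_nat.
lra.
Qed.

Theorem theorem4p1 (R : realType) (d N : nat)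
    (S : 'I_N -> 'rV[R]_d -> 'rV[R]_d) (ri : 'I_N -> R) (K : set 'rV[R]_d)
    (alpha gamma lambda : R) :
  (2 <= N)%N ->
  (forall i, 0 < ri i < 1) ->
  (forall i, similitude (S i) (ri i)) ->
  OSC S ->
  self_similar_set S K ->
  \sum_(i < N) ri i `^ alpha = 1 ->
  0 < gamma ->
  0 < lambda < rmin ri `^ alpha ->
  forall Phi Psi : set 'rV[R]_d,
    closed Phi -> closed Psi -> Phi `<=` K -> Psi `<=` K ->
    Phi !=set0 -> Psi !=set0 ->
    exists L : R, forall kappa : nat -> 'rV[R]_d -> seq 'I_N,
      kappa_seq S ri K kappa ->
      (fun n => Rlevel S ri K alpha gamma lambda kappa n Phi Psi) @ \oo --> L.
Proof.
move=> N2 ri01 _ _ _ moran gamma0 /andP[lambda0 lambda_lt] Phi Psi _ _.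
move=> PhiK PsiK Phi0 Psi0.
have alpha0 := moran_dim_ge0 N2 ri01 moran.
have [[kap0 ks_kap0]|no_kappa] := pselect (exists kap, kappa_seq S ri K kap);
  last by exists 0 => kap ks_kap; case: no_kappa; exists kap.
have lim_sqrtR := sqrtR_lim ri01 alpha0 (ltW gamma0) lambda0 lambda_lt
  PhiK PsiK Phi0 Psi0 ks_kap0.
exists (lim ((fun n => Num.sqrt (Rlevel S ri K alpha gamma lambda kap0 n Phi Psi))
  @ \oo) ^+ 2).
move=> kap ks_kap.
have -> : (fun n => Rlevel S ri K alpha gamma lambda kap n Phi Psi) =
    (fun n => Num.sqrt (Rlevel S ri K alpha gamma lambda kap n Phi Psi) ^+ 2).
  by apply: funext => n; rewrite sqr_sqrtr // Reff_ge0.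
exact: cvgM (lim_sqrtR _ ks_kap) (lim_sqrtR _ ks_kap).
Qed.
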